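(* Let $N\ge3$ and let $a_1,\dots,a_N\in\mathbb{Z}^2$ with $\sum_i a_i=0$. Then $\theta_N(a_1,\dots,a_N)=\frac{N!}{3!}\mu_N(a_1,\dots,a_N)$.
   Context: For $v,w\in\mathbb{Z}^2$, $v\wedge w=\det(v\,|\,w)$ and $[v\wedge w]_+=q^{\frac12 v\wedge w}+q^{-\frac12 v\wedge w}$ for a formal variable $q^{1/2}$. Let $\Omega_N$ be the set of cyclic permutations: orbits of the action of the cyclic group of order $N$ on orderings $(\tilde\omega(1),\dots,\tilde\omega(N))$ of $\{1,\dots,N\}$ by rotating positions. For $\omega\in\Omega_N$ choose a representative $\tilde\omega$ and set $k(\omega)=\sum_{2\le i<j\le N}a_{\tilde\omega(i)}\wedge a_{\tilde\omega(j)}$ (independent of the representative since $\sum a_i=0$). Define $\mu_N(a_1,\dots,a_N)=\sum_{\omega\in\Omega_N}q^{k(\omega)/2}$. The Blechman–Shustin multiplicity is defined recursively by $\theta_3(a_1,a_2,a_3)=[a_1\wedge a_2]_+$ and, for $N\ge4$, $\theta_N(a_1,\dots,a_N)=\sum_{1\le i<j\le N}\theta_{N-1}(a_1,\dots,\hat a_i,\dots,\hat a_j,\dots,a_N,a_i+a_j)\,\theta_3(a_i,a_j,-(a_i+a_j))$, where hats denote omission. *)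

From HB Require Import structures.
From mathcomp Require Import all_boot all_order all_algebra all_fingroup.
Set Implicit Arguments. Unset Strict Implicit. Unset Printing Implicit Defensive.
Import Order.TTheory GRing.Theory Num.Theory.
Local Open Scope ring_scope.

(* The formal variable q^{1/2} is represented by
   an arbitrary unit t of an arbitrary commutative unit ring R, so that
   q^{x/2} = t ^ x (integer power). *)

Definition vec := (int * int)%type.

Definition wedge (v w : vec) : int := v.1 * w.2 - v.2 * w.1.

Definition bracket (R : unitRingType) (t : R) (v w : vec) : R :=
  t ^ (wedge v w) + t ^ (- wedge v w).

Definition drop2 (l : seq vec) (i j : nat) : seq vec :=
  [seq nth 0 l k | k <- iota 0 (size l) & (k != i) && (k != j)].

Fixpoint theta_rec (R : unitRingType) (t : R) (n : nat) (l : seq vec) : R :=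
  match n with
  | 0 => bracket t (nth 0 l 0) (nth 0 l 1)
  | n'.+1 =>
      \sum_(i < size l) \sum_(j < size l | (i < j)%N)
        theta_rec t n' (rcons (drop2 l i j) (nth 0 l i + nth 0 l j))
        * bracket t (nth 0 l i) (nth 0 l j)
  end.

Definition theta (R : unitRingType) (t : R) (l : seq vec) : R :=
  theta_rec t (size l - 3) l.

(* Orderings (w(1),...,w(N)) of {1..N} are permutations s of 'I_N
   (0-indexed: s i = w(i+1)). *)
Definition cyc_orbit (N : nat) (s : 'S_N) : {set 'S_N} :=
  [set s' : 'S_N | [exists c : 'I_N, [forall i : 'I_N, forall j : 'I_N,
       (val j == (val i + val c) %% N)%N ==> (s' i == s j)]]].

Definition Omega (N : nat) : {set {set 'S_N}} :=
  [set cyc_orbit s | s : 'S_N].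

(* k(w) = sum_{2 <= i < j <= N} a_{w(i)} /\ a_{w(j)} (1-indexed);
   0-indexed: 1 <= i < j <= N-1 *)
Definition kappa (N : nat) (a : 'I_N -> vec) (s : 'S_N) : int :=
  \sum_(i : 'I_N | (0 < i)%N) \sum_(j : 'I_N | (i < j)%N) wedge (a (s i)) (a (s j)).

Definition mu (R : unitRingType) (t : R) (N : nat) (a : 'I_N -> vec) : R :=
  \sum_(O in Omega N) t ^ (kappa a (repr O)).

From HB Require Import structures.
From mathcomp Require Import all_boot all_order all_algebra all_fingroup.
From mathcomp Require Import ring zify.
Set Implicit Arguments. Unset Strict Implicit. Unset Printing Implicit Defensive.
Import Order.TTheory GRing.Theory Num.Theory.
Local Open Scope ring_scope.

(* Write K(v) = sum_{i<j} v_i /\ v_j for a sequence of vectors.  When the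
   entries of v sum to 0, K(v) is unchanged by a cyclic rotation of v and by
   deleting its first entry.  Hence mu_N(a) is the sum of q^{K/2} over the
   orderings of a_1, ..., a_{N-1}, and the same sum S(a) over all orderings of
   a_1, ..., a_N equals N mu_N(a).  Expanding S(a) along the first two entries
   a_i, a_j of an ordering gives the sum over i < j of [a_i /\ a_j]_+ times the
   sum over the orderings of the other entries, i.e. times mu_{N-1} of the
   family where a_i, a_j are replaced by a_i + a_j, put last.  This is the
   recursion of theta_N, so by induction theta_N = (N-1)!/3! S(a) = N!/3! mu_N. *)

Lemma wedgeDl v1 v2 w : wedge (v1 + v2) w = wedge v1 w + wedge v2 w.
Proof. rewrite /wedge /=; ring. Qed.

Lemma wedgeDr v w1 w2 : wedge v (w1 + w2) = wedge v w1 + wedge v w2.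
Proof. rewrite /wedge /=; ring. Qed.

Lemma wedgeNr v w : wedge v (- w) = - wedge v w.
Proof. rewrite /wedge /=; ring. Qed.

Lemma wedge0l v : wedge 0 v = 0.
Proof. rewrite /wedge /=; ring. Qed.

Lemma wedge0r v : wedge v 0 = 0.
Proof. rewrite /wedge /=; ring. Qed.

Lemma wedgexx v : wedge v v = 0.
Proof. rewrite /wedge /=; ring. Qed.

Lemma wedgeC v w : wedge w v = - wedge v w.
Proof. rewrite /wedge /=; ring. Qed.

Lemma wedge_sumr (I : Type) (r : seq I) (P : pred I) (F : I -> vec) v :
  wedge v (\sum_(i <- r | P i) F i) = \sum_(i <- r | P i) wedge v (F i).
Proof. exact: (big_morph (wedge v) (wedgeDr v) (wedge0r v)). Qed.

Lemma wedge_eq0 v w : v + w = 0 -> wedge v w = 0.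
Proof. by move/eqP; rewrite addrC addr_eq0 => /eqP ->; rewrite wedgeNr wedgexx oppr0. Qed.

Fixpoint wedge_pairs (v : seq vec) : int :=
  if v is x :: v' then wedge x (\sum_(y <- v') y) + wedge_pairs v' else 0.

Lemma wedge_pairsE (v : seq vec) :
  wedge_pairs v =
  \sum_(i < size v) \sum_(j < size v | (i < j)%N) wedge (nth 0 v i) (nth 0 v j).
Proof.
elim: v => [|x v IH] /=; first by rewrite big_ord0.
rewrite IH [RHS](big_ord_recl (size v)); congr (_ + _).
  rewrite [RHS]big_mkcond [RHS](big_ord_recl (size v)) /= add0r wedge_sumr (big_nth 0) big_mkord.
  by apply: eq_bigr.
apply: eq_bigr => i _.
rewrite [RHS]big_mkcond [RHS](big_ord_recl (size v)) /= add0r [LHS]big_mkcond.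
by apply: eq_bigr.
Qed.

Lemma wedge_pairs_rcons (v : seq vec) x :
  wedge_pairs (rcons v x) = wedge_pairs v + wedge (\sum_(y <- v) y) x.
Proof.
elim: v => [|y v IH] /=; first by rewrite !big_nil wedge0r wedge0l.
by rewrite IH -cats1 big_cat big_seq1 big_cons wedgeDr wedgeDl addrACA.
Qed.

Lemma wedge_pairs_cons x (v : seq vec) :
  x + \sum_(y <- v) y = 0 -> wedge_pairs (x :: v) = wedge_pairs v.
Proof. by move=> /wedge_eq0 /= ->; rewrite add0r. Qed.

Lemma wedge_pairs_rot i (v : seq vec) :
  \sum_(y <- v) y = 0 -> wedge_pairs (rot i v) = wedge_pairs v.
Proof.
move=> v0; elim: i => [|i IH]; first by rewrite rot0.
have [/rot_oversize -> //|lt_iv] := leqP (size v) i.+1.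
rewrite rotS -?IH; last exact: ltnW.
have : \sum_(y <- rot i v) y = 0 by rewrite (perm_big v) // perm_rot.
case: (rot i v) => [|x w] //; rewrite big_cons rot1_cons wedge_pairs_rcons => xw0.
by rewrite (wedge_pairs_cons xw0) wedge_eq0 ?addr0 // addrC.
Qed.

Definition ordering_sum (R : unitRingType) (t : R) (f : nat -> vec) (I : seq nat) : R :=
  \sum_(s <- permutations I) t ^ wedge_pairs (map f s).

Lemma rem_map_in (T1 T2 : eqType) (h : T1 -> T2) (s : seq T1) x :
  uniq (map h s) -> x \in s -> rem (h x) (map h s) = map h (rem x s).
Proof.
elim: s => [|y s IH] //= /andP[hy_notin uhs]; rewrite in_cons.
have [-> _|neq_yx /= xs] := eqVneq y x; first by rewrite eqxx.
have -> : (h y == h x) = false.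
  by apply/negbTE; apply: contraNneq hy_notin => ->; apply: map_f.
by rewrite IH.
Qed.

Lemma perm_iotaS n : perm_eq (iota 0 n.+1) (n :: iota 0 n).
Proof. by rewrite -addn1 iotaD cats1 perm_rcons. Qed.

Section OrderingSum.

Variables (R : comUnitRingType) (t : R).
Hypothesis t_unit : t \is a GRing.unit.
Implicit Types (f g : nat -> vec) (I J : seq nat).

Lemma ordering_sum_nil f : ordering_sum t f [::] = 1.
Proof. by rewrite /ordering_sum /= big_seq1 expr0z. Qed.

Lemma eq_in_ordering_sum f g I :
  {in I, f =1 g} -> ordering_sum t f I = ordering_sum t g I.
Proof.
move=> efg; apply: eq_big_seq => s; rewrite mem_permutations => sI.
by congr (_ ^ wedge_pairs _); apply/eq_in_map => y; rewrite (perm_mem sI) => /efg.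
Qed.

Lemma ordering_sum_rem f I : uniq I -> (0 < size I)%N ->
  ordering_sum t f I =
  \sum_(x <- I) t ^ wedge (f x) (\sum_(y <- rem x I) f y) * ordering_sum t f (rem x I).
Proof.
move=> uI I_gt0; rewrite /ordering_sum (perm_big _ (permutationsE I_gt0)).
rewrite undup_id // big_allpairs_dep; apply: eq_big_seq => x _.
rewrite mulr_sumr; apply: eq_big_seq => s; rewrite mem_permutations => sI.
by rewrite /= exprzDr // big_map (perm_big _ sI).
Qed.

Lemma ordering_sum1 f x : ordering_sum t f [:: x] = 1.
Proof.
by rewrite ordering_sum_rem //= big_seq1 eqxx big_nil wedge0r expr0z mul1r ordering_sum_nil.
Qed.

Lemma ordering_sum2 f x y : x != y ->
  ordering_sum t f [:: x; y] = t ^ wedge (f x) (f y) + t ^ wedge (f y) (f x).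
Proof.
move=> neq_xy; rewrite ordering_sum_rem /= ?inE ?andbT //.
by rewrite big_cons big_seq1 eqxx (negbTE neq_xy) eqxx !big_seq1 !ordering_sum1 !mulr1.
Qed.

Lemma ordering_sum_map f (h : nat -> nat) I :
  uniq (map h I) -> ordering_sum t f (map h I) = ordering_sum t (f \o h) I.
Proof.
elim: {I}(size I) {-2}I (erefl (size I)) => [|n IH] I sI uhI.
  by case: I sI uhI => // _ _; rewrite !ordering_sum_nil.
have uI : uniq I := map_uniq uhI.
have I_gt0 : (0 < size I)%N by rewrite sI.
rewrite ordering_sum_rem ?size_map // ordering_sum_rem // big_map.
apply: eq_big_seq => x xI; rewrite rem_map_in // big_map IH ?size_rem ?sI //.
by rewrite -rem_map_in // rem_uniq.
Qed.

Lemma perm_ordering_sum f I J :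
  perm_eq I J -> ordering_sum t f I = ordering_sum t f J.
Proof. by move=> IJ; apply: perm_big; apply: perm_permutations. Qed.

Lemma sum_opp_rem f I x :
  x \in I -> \sum_(y <- I) f y = 0 -> \sum_(y <- rem x I) f y = - f x.
Proof. by move=> xI; rewrite (big_rem x xI) /= addrC => /eqP; rewrite addr_eq0 => /eqP. Qed.

(* Each ordering of [x :: I] is a rotation of exactly one ordering starting
   with [x], and for a balanced family rotations do not change [wedge_pairs]. *)
Lemma ordering_sum_cons f x I : x \notin I -> f x + \sum_(y <- I) f y = 0 ->
  ordering_sum t f (x :: I) = (size I).+1%:R * ordering_sum t f I.
Proof.
move=> xI xI0; rewrite /ordering_sum (perm_big _ (permutationsErot x I)).
rewrite big_allpairs_dep mulr_sumr; apply: eq_big_seq => u.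
rewrite mem_permutations => uI.
have xu0 : f x + \sum_(y <- map f u) y = 0 by rewrite big_map (perm_big _ uI).
have xu : x \notin u by rewrite (perm_mem uI).
rewrite memNindex // (perm_size uI) addn1.
under eq_bigr => i _ do rewrite map_rot wedge_pairs_rot ?big_cons //.
by rewrite big_const_seq count_predT size_iota iter_addr_0 mulr_natl wedge_pairs_cons.
Qed.

Lemma ordering_sum_iotaS f n : \sum_(k <- iota 0 n.+1) f k = 0 ->
  ordering_sum t f (iota 0 n.+1) = n.+1%:R * ordering_sum t f (iota 0 n).
Proof.
rewrite (perm_big _ (perm_iotaS n)) (perm_ordering_sum _ (perm_iotaS n)) big_cons => f0.
by rewrite ordering_sum_cons ?size_iota // mem_iota ltnn andbF.
Qed.

Lemma ordering_sum_rem2 f I : uniq I -> (1 < size I)%N -> \sum_(x <- I) f x = 0 ->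
  ordering_sum t f I =
  \sum_(x <- I) \sum_(y <- rem x I)
     t ^ wedge (f x) (f y) * ordering_sum t f (rem y (rem x I)).
Proof.
move=> uI I_gt1 I0; rewrite ordering_sum_rem ?(ltnW I_gt1) //.
apply: eq_big_seq => x xI; rewrite sum_opp_rem // wedgeNr wedgexx oppr0 expr0z mul1r.
have remx_gt0 : (0 < size (rem x I))%N by rewrite size_rem // -subn1 subn_gt0.
rewrite ordering_sum_rem ?rem_uniq //.
apply: eq_big_seq => y yI; congr (t ^ _ * _).
have := sum_opp_rem xI I0; rewrite (big_rem y yI) /= => /(canRL (addKr (f y))) ->.
by rewrite wedgeDr !wedgeNr wedgexx oppr0 add0r (wedgeC (f x) (f y)) opprK.
Qed.
End OrderingSum.

Lemma sum_neq_pairs (V : nmodType) n (F : 'I_n -> 'I_n -> V) :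
  \sum_(i < n) \sum_(j < n | j != i) F i j = \sum_(i < n) \sum_(j < n | (i < j)%N) (F i j + F j i).
Proof.
have split_neq i : \sum_(j < n | j != i) F i j =
    \sum_(j < n | (i < j)%N) F i j + \sum_(j < n | (j < i)%N) F i j.
  rewrite (bigID (fun j : 'I_n => (i < j)%N)) /=; congr (_ + _); apply: eq_bigl => j;
    by rewrite -val_eqE /=; case: ltngtP.
under eq_bigr do rewrite split_neq.
under [RHS]eq_bigr do rewrite big_split.
rewrite big_split [RHS]big_split /=; congr (_ + _).
by rewrite (exchange_big_dep xpredT).
Qed.

Definition skip2 (n i j : nat) : seq nat := [seq k <- iota 0 n | (k != i) && (k != j)].

Lemma rem2_iota n i j : rem j (rem i (iota 0 n)) = skip2 n i j.
Proof.
rewrite rem_filter ?rem_uniq ?iota_uniq // rem_filter ?iota_uniq //.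
by rewrite -filter_predI; apply: eq_filter => k /=; rewrite andbC.
Qed.

Lemma skip2C n i j : skip2 n i j = skip2 n j i.
Proof. by apply: eq_filter => k; rewrite andbC. Qed.

Lemma ordering_sum_pairs (R : comUnitRingType) (t : R) (f : nat -> vec) n :
  t \is a GRing.unit -> (1 < n)%N -> \sum_(k <- iota 0 n) f k = 0 ->
  ordering_sum t f (iota 0 n) =
  \sum_(i < n) \sum_(j < n | (i < j)%N)
     ordering_sum t f (skip2 n i j) * bracket t (f i) (f j).
Proof.
move=> t_unit n_gt1 f0; rewrite ordering_sum_rem2 ?iota_uniq ?size_iota //.
have -> : \sum_(x <- iota 0 n) \sum_(y <- rem x (iota 0 n))
      t ^ wedge (f x) (f y) * ordering_sum t f (rem y (rem x (iota 0 n))) =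
    \sum_(i < n) \sum_(j < n | j != i) t ^ wedge (f i) (f j) * ordering_sum t f (skip2 n i j).
  rewrite -{1}[n]subn0 -/(index_iota 0 n) big_mkord; apply: eq_bigr => i _.
  under eq_bigr => j _ do rewrite rem2_iota.
  rewrite rem_filter ?iota_uniq // big_filter -{1}[n]subn0 -/(index_iota 0 n) big_mkord.
  by apply: eq_big => j.
rewrite sum_neq_pairs; apply: eq_bigr => i _; apply: eq_bigr => j _.
by rewrite /bracket (skip2C n j i) (wedgeC (f i) (f j)) mulrDr !(mulrC (ordering_sum _ _ _)).
Qed.

(* The orderings of all entries of [l] but the last; putting the last entry
   first, they represent the cyclic orderings of [l]. *)
Definition mu_seq (R : unitRingType) (t : R) (l : seq vec) : R :=
  ordering_sum t (nth 0 l) (iota 0 (size l).-1).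

Lemma sum_nth_iota (l : seq vec) : \sum_(x <- l) x = \sum_(k <- iota 0 (size l)) nth 0 l k.
Proof. by rewrite -[in LHS](mkseq_nth 0 l) big_map. Qed.

Lemma size_skip2 n i j : (i < n)%N -> (j < n)%N -> i != j -> size (skip2 n i j) = n.-2.
Proof.
move=> i_lt j_lt neq_ij; rewrite -rem2_iota !size_rem ?size_iota ?mem_iota //.
by rewrite rem_filter ?iota_uniq // mem_filter /= mem_iota j_lt eq_sym neq_ij.
Qed.

Section Merge.

Variables (l : seq vec) (i j : nat).
Hypotheses (lt_ij : (i < j)%N) (lt_jl : (j < size l)%N).

Let merged := rcons (drop2 l i j) (nth 0 l i + nth 0 l j).
Let lt_il : (i < size l)%N := ltn_trans lt_ij lt_jl.

Lemma sum_merge : \sum_(x <- merged) x = \sum_(x <- l) x.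
Proof.
have j_in : j \in rem i (iota 0 (size l)).
  by rewrite rem_filter ?iota_uniq // mem_filter /= mem_iota lt_jl gtn_eqF.
rewrite [RHS]sum_nth_iota (big_rem i) ?mem_iota //= (big_rem j j_in) /=.
rewrite rem2_iota /merged /drop2 -cats1 big_cat big_seq1 big_map /=.
by rewrite addrA addrC.
Qed.

Lemma size_merge : size merged = (size l).-1.
Proof.
rewrite size_rcons size_map -/(skip2 _ i j) size_skip2 //; last by rewrite neq_ltn lt_ij.
by move: lt_ij lt_jl; case: (size l) => [|[|n]] //; case: j.
Qed.

Lemma mu_seq_merge (R : comUnitRingType) (t : R) : t \is a GRing.unit ->
  mu_seq t merged = ordering_sum t (nth 0 l) (skip2 (size l) i j).
Proof.
move=> t_unit; set J := skip2 (size l) i j.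
have uJ : uniq J by rewrite filter_uniq // iota_uniq.
rewrite /mu_seq /merged /drop2 size_rcons size_map -/(skip2 _ i j) -/J /=.
rewrite (@eq_in_ordering_sum _ _ _ (nth 0 l \o nth 0%N J)); last first.
  by move=> k; rewrite mem_iota /= => k_lt; rewrite nth_rcons size_map k_lt (nth_map 0%N).
by rewrite -ordering_sum_map -/(mkseq _ _) ?mkseq_nth.
Qed.

End Merge.

Lemma dvdn_fact_leq m n : (m <= n)%N -> (m`! %| n`!)%N.
Proof.
elim: n => [|n IH]; first by rewrite leqn0 => /eqP ->.
by rewrite leq_eqVlt => /predU1P [-> //|/IH]; rewrite factS; apply: dvdn_mull.
Qed.

Lemma theta_rec_mu_seq (R : comUnitRingType) (t : R) m (l : seq vec) :
  t \is a GRing.unit -> size l = m.+3 -> \sum_(x <- l) x = 0 ->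
  theta_rec t m l = (m.+3`! %/ 3`!)%:R * mu_seq t l.
Proof.
move=> t_unit; elim: m l => [|m IH] l sl l0.
  rewrite /= /mu_seq sl ordering_sum2 // divnn mul1r /bracket.
  by rewrite (wedgeC (nth 0 l 0)).
have l0' : \sum_(k <- iota 0 m.+4) nth 0 l k = 0 by rewrite -sl -sum_nth_iota.
rewrite /= sl; transitivity (\sum_(i < m.+4) \sum_(j < m.+4 | (i < j)%N)
    (m.+3`! %/ 3`!)%:R *
    (ordering_sum t (nth 0 l) (skip2 m.+4 i j) * bracket t (nth 0 l i) (nth 0 l j))).
  apply: eq_bigr => i _; apply: eq_bigr => j lt_ij.
  by rewrite IH ?sum_merge ?size_merge ?mu_seq_merge ?sl // -mulrA.
under eq_bigr do rewrite -mulr_sumr.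
rewrite -mulr_sumr -ordering_sum_pairs // ordering_sum_iotaS // /mu_seq sl.
by rewrite mulrA -natrM mulnC muln_divA ?dvdn_fact_leq // -factS.
Qed.

Section CyclicOrbits.

Variable n : nat.
Implicit Types s : 'S_n.+1.

Lemma cyc_orbitP s s' :
  reflect (exists c, forall i, s' i = s (i + c)) (s' \in cyc_orbit s).
Proof.
rewrite inE; apply: (iffP existsP) => [[c /forallP s'E]|[c s'E]]; exists c.
  by move=> i; have /forallP /(_ (i + c)) /implyP /(_ (eqxx _)) /eqP := s'E i.
apply/forallP => i; apply/forallP => j; apply/implyP => /eqP j_val.
have -> : j = i + c by apply: val_inj.
by rewrite s'E.
Qed.

Lemma cyc_orbit_refl s : s \in cyc_orbit s.
Proof. by apply/cyc_orbitP; exists 0 => i; rewrite addr0. Qed.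

Lemma cyc_orbit_eq s s' : s' \in cyc_orbit s -> cyc_orbit s' = cyc_orbit s.
Proof.
case/cyc_orbitP => c s'E; apply/setP => x.
apply/cyc_orbitP/cyc_orbitP => [[d xE]|[d xE]].
  by exists (d + c) => i; rewrite xE s'E addrA.
by exists (d - c) => i; rewrite xE s'E -addrA subrK.
Qed.

Lemma Omega_first_max :
  Omega n.+1 = @cyc_orbit n.+1 @: [set s : 'S_n.+1 | s ord0 == ord_max].
Proof.
apply/setP => O; apply/imsetP/imsetP => [[s _ ->]|[s _ ->]]; last by exists s.
pose c := (s^-1)%g ord_max; pose s0 := (perm (addIr c) * s)%g.
have s0E i : s0 i = s (i + c) by rewrite permM permE.
exists s0; first by rewrite inE s0E add0r permKV.
by apply/esym/cyc_orbit_eq/cyc_orbitP; exists c.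
Qed.

Lemma cyc_orbit_first_max_inj :
  {in [set s : 'S_n.+1 | s ord0 == ord_max] &, injective (@cyc_orbit n.+1)}.
Proof.
move=> s1 s2; rewrite !inE => /eqP s1_0 /eqP s2_0 eq_orb.
have /cyc_orbitP [c s1E] : s1 \in cyc_orbit s2 by rewrite -eq_orb cyc_orbit_refl.
have c0 : c = 0 by apply: (@perm_inj _ s2); rewrite -[c]add0r -s1E s1_0 s2_0.
by apply/permP => i; rewrite s1E c0 addr0.
Qed.

Lemma sum_Omega (V : nmodType) (F : 'S_n.+1 -> V) :
  (forall s s', s' \in cyc_orbit s -> F s' = F s) ->
  \sum_(O in Omega n.+1) F (repr O) = \sum_(s : 'S_n.+1 | s ord0 == ord_max) F s.
Proof.
move=> F_orbit; rewrite Omega_first_max big_imset /=; last exact: cyc_orbit_first_max_inj.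
apply: eq_big => [s|s _]; first by rewrite inE.
exact/F_orbit/(mem_repr _ (cyc_orbit_refl s)).
Qed.

End CyclicOrbits.

Lemma nth_rot (T : Type) (x0 : T) (s : seq T) k i :
  (k <= size s)%N -> (i < size s)%N -> nth x0 (rot k s) i = nth x0 s ((i + k) %% size s).
Proof.
move=> k_le i_lt; rewrite /rot nth_cat size_drop.
case: ltnP => i_k.
  by rewrite nth_drop modn_small; [rewrite addnC | lia].
rewrite nth_take; last by lia.
have -> : (i + k = i - (size s - k) + size s)%N by lia.
by rewrite modnDr modn_small //; lia.
Qed.

Lemma nth_map_enum n (T : Type) (x0 : T) (F : 'I_n -> T) (i : 'I_n) :
  nth x0 [seq F j | j <- enum 'I_n] i = F i.
Proof. by rewrite (nth_map i) ?size_enum_ord // nth_ord_enum. Qed.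

Lemma map_enum_addr n (T : Type) (F : 'I_n.+1 -> T) (c : 'I_n.+1) :
  [seq F (i + c) | i <- enum 'I_n.+1] = rot c [seq F i | i <- enum 'I_n.+1].
Proof.
have sz : size [seq F i | i <- enum 'I_n.+1] = n.+1 by rewrite size_map size_enum_ord.
apply: (@eq_from_nth _ (F ord0)); first by rewrite size_rot !size_map.
rewrite size_map size_enum_ord => k lt_kn; pose i := Ordinal lt_kn.
rewrite nth_rot ?sz //; last exact: ltnW.
by rewrite -[k]/(val i) -[((i + c) %% n.+1)%N]/(val (i + c)) !nth_map_enum.
Qed.

Lemma sum_map_perm n (a : 'I_n -> vec) (s : 'S_n) :
  \sum_(x <- [seq a (s i) | i <- enum 'I_n]) x = \sum_(i < n) a i.
Proof. by rewrite big_map big_enum [RHS](reindex_inj (@perm_inj _ s)); apply: eq_bigl. Qed.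

Lemma kappaE n (a : 'I_n.+1 -> vec) (s : 'S_n.+1) : \sum_(i < n.+1) a i = 0 ->
  kappa a s = wedge_pairs [seq a (s i) | i <- enum 'I_n.+1].
Proof.
move=> a0; set v := [seq a (s i) | i <- enum 'I_n.+1].
have v0 : v`_0 + \sum_(j < n.+1 | (0 < j)%N) v`_j = 0.
  rewrite -[RHS]a0 [RHS](reindex_inj (@perm_inj _ s)) [RHS](bigD1 ord0) //=.
  congr (_ + _); first exact: (nth_map_enum 0 _ ord0).
  by apply: eq_big => [j|j _]; rewrite ?lt0n ?nth_map_enum.
rewrite wedge_pairsE size_map size_enum_ord (bigD1 ord0) //= -wedge_sumr wedge_eq0 //.
rewrite add0r /kappa; apply: eq_big => [i|i _]; first by rewrite lt0n.
by apply: eq_bigr => j _; rewrite !nth_map_enum.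
Qed.

Lemma kappa_cyc_orbit n (a : 'I_n.+1 -> vec) (s s' : 'S_n.+1) :
  \sum_(i < n.+1) a i = 0 -> s' \in cyc_orbit s -> kappa a s' = kappa a s.
Proof.
move=> a0 /cyc_orbitP [c s'E]; rewrite !kappaE //.
under eq_map do rewrite s'E.
by rewrite (map_enum_addr (fun i => a (s i))) wedge_pairs_rot // sum_map_perm.
Qed.

Lemma perm_eq_val_perms n :
  perm_eq [seq [seq val (s i) | i <- enum 'I_n] | s : 'S_n <- enum 'S_n]
          (permutations (iota 0 n)).
Proof.
apply: uniq_perm; [|exact: permutations_uniq|].
  rewrite map_inj_uniq ?enum_uniq // => s1 s2 eq12; apply/permP => i; apply: val_inj.
  by have := congr1 (nth 0%N ^~ i) eq12; rewrite /= !nth_map_enum.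
pose t := [tuple val i | i < n].
have tE : val t = iota 0 n by rewrite -val_enum_ord.
move=> u; rewrite mem_permutations -tE.
apply/mapP/tuple_permP => [[s _ ->]|[s ->]]; exists s; rewrite ?mem_enum //=;
  by apply: eq_map => i; rewrite tnth_mktuple.
Qed.

Lemma sum_permutations_head (V : nmodType) x (I : seq nat) (G : seq nat -> V) :
  uniq (x :: I) ->
  \sum_(u <- permutations (x :: I) | head 0%N u == x) G u =
  \sum_(u <- permutations I) G (x :: u).
Proof.
move=> uxI; rewrite big_mkcond (perm_big _ (permutationsE _)) // undup_id //.
rewrite big_allpairs_dep big_cons /= eqxx [X in _ + X]big1_seq ?addr0 // => y /andP[_ yI].
apply: big1 => u _ /=; rewrite ifF //; apply: contraTF yI => /eqP ->.
by case/andP: uxI.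
Qed.

Lemma sum_first_max_mu_seq (R : comUnitRingType) (t : R) n (a : 'I_n.+1 -> vec) :
  \sum_(i < n.+1) a i = 0 ->
  \sum_(s : 'S_n.+1 | s ord0 == ord_max) t ^ wedge_pairs [seq a (s i) | i <- enum 'I_n.+1] =
  mu_seq t [seq a i | i <- enum 'I_n.+1].
Proof.
move=> a0; set l := [seq a i | i <- enum 'I_n.+1]; pose f := nth 0 l.
have sl : size l = n.+1 by rewrite size_map size_enum_ord.
have iotaS := perm_iotaS n.
have fn0 : f n + \sum_(k <- iota 0 n) f k = 0.
  have := sum_nth_iota l; rewrite sl (perm_big _ iotaS) big_cons => <-.
  by rewrite big_map big_enum.
have lsE (s : 'S_n.+1) :
    [seq a (s i) | i <- enum 'I_n.+1] = map f [seq val (s i) | i <- enum 'I_n.+1].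
  by rewrite -map_comp; apply: eq_map => i /=; rewrite /f nth_map_enum.
have headE (s : 'S_n.+1) : head 0%N [seq val (s i) | i <- enum 'I_n.+1] = s ord0.
  by rewrite enum_ordSl.
transitivity (\sum_(u <- permutations (iota 0 n.+1) | head 0%N u == n)
                t ^ wedge_pairs (map f u)).
  rewrite -(perm_big _ (perm_eq_val_perms n.+1)) big_map big_enum_cond /=.
  by apply: eq_big => [s|s _]; rewrite ?headE ?lsE.
rewrite (perm_big _ (perm_permutations iotaS)) sum_permutations_head; last first.
  by rewrite -(perm_uniq iotaS) iota_uniq.
rewrite /mu_seq sl; apply: eq_big_seq => u; rewrite mem_permutations => uI.
by rewrite wedge_pairs_cons // big_map (perm_big _ uI).
Qed.

Theorem proposition1p3 (R : comUnitRingType) (t : R) (ht : t \is a GRing.unit)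
    (N : nat) (hN : (3 <= N)%N) (a : 'I_N -> vec) (hsum : \sum_(i < N) a i = 0) :
  theta t [seq a i | i <- enum 'I_N] = (N`! %/ 3`!)%:R * mu t a.
Proof.
case: N a hsum hN => [|[|[|m]]] a a0 // _.
have l0 : \sum_(x <- [seq a i | i <- enum 'I_m.+3]) x = 0 by rewrite big_map big_enum.
have sl : size [seq a i | i <- enum 'I_m.+3] = m.+3 by rewrite size_map size_enum_ord.
rewrite /theta sl !subSS subn0 (theta_rec_mu_seq ht sl l0); congr (_ * _).
rewrite /mu (sum_Omega (F := fun s => t ^ kappa a s)); last first.
  by move=> s s' /(kappa_cyc_orbit a0) ->.
by rewrite -sum_first_max_mu_seq //; apply: eq_bigr => s _; rewrite kappaE.
Qed.
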